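(* Let $D,\ell,\beta>0$. For $a>0$ put $\omega_N=\frac{\sqrt{a\beta}}2$, $\xi=\frac{D\ell}{4}\sqrt{\beta/a}$. (i) If $D^2\ell\beta<8$ and $a=\frac{4}{D^2\beta}$, and $c=\frac{e^{D\omega_N\xi}}{\cos(D\omega_N\sqrt{1-\xi^2})-\frac{\xi}{\sqrt{1-\xi^2}}\sin(D\omega_N\sqrt{1-\xi^2})}$, then $$a\ge\frac{\ell}{2}\quad\text{and}\quad c\le\frac{2e}{(1-\frac{D^2\ell\beta}{8})^2}.$$ (ii) If $a=\frac{D^2\ell^2\beta}{16}(1-\tanh^2(\frac{D^2\ell\beta}{8}))$ and $c=\frac{e^{D\omega_N\xi}}{\cosh(D\omega_N\sqrt{\xi^2-1})-\frac{\xi}{\sqrt{\xi^2-1}}\sinh(D\omega_N\sqrt{\xi^2-1})}$, then $$a\ge\frac{D^2\ell^2\beta}{16}\exp\Big(-\frac{D^2\ell\beta}{4}\Big)\quad\text{and}\quad c\le\frac{4}{D^2\ell\beta}\exp\Big(\frac{D^2\ell\beta}{2}\Big).$$ *)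

From Stdlib Require Export Reals.
Open Scope R_scope.

Definition omegaN (a beta : R) : R := sqrt (a * beta) / 2.
Definition xi (D l beta a : R) : R := D * l / 4 * sqrt (beta / a).

Definition c_under (D l beta a : R) : R :=
  let w := omegaN a beta in
  let z := xi D l beta a in
  exp (D * w * z) /
  (cos (D * w * sqrt (1 - z ^ 2)) - z / sqrt (1 - z ^ 2) * sin (D * w * sqrt (1 - z ^ 2))).

Definition c_over (D l beta a : R) : R :=
  let w := omegaN a beta in
  let z := xi D l beta a in
  exp (D * w * z) /
  (cosh (D * w * sqrt (z ^ 2 - 1)) - z / sqrt (z ^ 2 - 1) * sinh (D * w * sqrt (z ^ 2 - 1))).

From Stdlib Require Import Reals Lra.
Open Scope R_scope.

(* For every a > 0 one has D ω_N ξ = D²ℓβ/8, so in both cases c becomes a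
   function of the single quantity t := D²ℓβ/8.

   (i) Here D ω_N = 1 and ξ = t. With s := √(1 - t²), the bounds
   cos s ≥ 1 - s²/2 and sin s ≤ s show that the denominator of c is at least
   (1 + t²)/2 - t = (1 - t)²/2.

   (ii) Here a = (Dℓ/4)² β / cosh² t, so ξ = cosh t, √(ξ² - 1) = sinh t and
   D ω_N = t / cosh t. The denominator of c is then sinh (t - t tanh t) / sinh t.
   Using sinh v ≥ v, 1 - tanh t = e^(-t) / cosh t, cosh t ≤ e^t and
   sinh t ≤ e^t / 2 gives c ≤ e^(4t) / (2t). The bound on a is
   1 - tanh² t = 1 / cosh² t ≥ e^(-2t). *)

Lemma Rdiv_le_contravar_r (x d q : R) : 0 <= x -> 0 < q -> q <= d -> x / d <= x / q.
Proof.
  intros Hx Hq Hqd. unfold Rdiv.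
  apply Rmult_le_compat_l; [exact Hx|]. now apply Rinv_le_contravar.
Qed.

Lemma sin_sq_le_sq (x : R) : sin x ^ 2 <= x ^ 2.
Proof.
  assert (Hnonneg : forall y, 0 <= y -> sin y ^ 2 <= y ^ 2).
  { intros y [Hy | <-]; [|rewrite sin_0; lra].
    assert (sin y < y) by (apply sin_lt_x; lra).
    assert (- y <= sin y).
    { destruct (Rle_or_lt y 1).
      - pose proof PI2_1. pose proof (sin_ge_0 y ltac:(lra) ltac:(lra)). lra.
      - pose proof (SIN_bound y). lra. }
    nra. }
  destruct (Rle_or_lt 0 x) as [Hx | Hx]; [now apply Hnonneg|].
  pose proof (Hnonneg (- x) ltac:(lra)) as Hneg. rewrite sin_neg in Hneg.
  nra.
Qed.

Lemma cos_ge_1_sub_sq_div_2 (x : R) : 1 - x ^ 2 / 2 <= cos x.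
Proof.
  replace x with (2 * (x / 2)) at 2 by field.
  rewrite cos_2a_sin.
  pose proof (sin_sq_le_sq (x / 2)).
  nra.
Qed.

Lemma exp_le_compat (x y : R) : x <= y -> exp x <= exp y.
Proof. intros [Hxy | ->]; [left; now apply exp_increasing | right; reflexivity]. Qed.

Lemma cosh_ge_1 (x : R) : 1 <= cosh x.
Proof. unfold cosh. pose proof (exp_ineq1_le x). pose proof (exp_ineq1_le (- x)). lra. Qed.

Lemma cosh_le_exp (x : R) : 0 <= x -> cosh x <= exp x.
Proof.
  intros Hx. unfold cosh.
  assert (exp (- x) <= exp x) by (apply exp_le_compat; lra).
  lra.
Qed.

Lemma sinh_le_half_exp (x : R) : sinh x <= exp x / 2.
Proof. unfold sinh. pose proof (exp_pos (- x)). lra. Qed.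

Lemma sinh_ge_id (x : R) : 0 <= x -> x <= sinh x.
Proof.
  intros [Hx | <-]; [|rewrite sinh_0; lra].
  destruct (MVT_cor1 sinh 0 x derivable_sinh Hx) as [c [Hc _]].
  rewrite (pr_nu sinh c _ (derivable_pt_sinh c)), derive_pt_sinh, sinh_0 in Hc.
  pose proof (cosh_ge_1 c).
  nra.
Qed.

Lemma sinh_pos (x : R) : 0 < x -> 0 < sinh x.
Proof. intros Hx. pose proof (sinh_ge_id x). lra. Qed.

Lemma cosh_sq_sub_sinh_sq (x : R) : cosh x ^ 2 - sinh x ^ 2 = 1.
Proof.
  unfold cosh, sinh. rewrite exp_Ropp.
  pose proof (exp_pos x). field. lra.
Qed.

Lemma cosh_sub_sinh (x : R) : cosh x - sinh x = exp (- x).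
Proof. unfold cosh, sinh. field. Qed.

Lemma sinh_sub (x y : R) : sinh (x - y) = sinh x * cosh y - cosh x * sinh y.
Proof.
  unfold sinh, cosh.
  replace (x - y) with (x + - y) by ring.
  replace (- (x + - y)) with (- x + y) by ring.
  rewrite !exp_plus.
  field.
Qed.

Lemma sqrt_cosh_sq_sub_1 (x : R) : 0 <= x -> sqrt (cosh x ^ 2 - 1) = sinh x.
Proof.
  intros Hx.
  replace (cosh x ^ 2 - 1) with (sinh x * sinh x) by (pose proof (cosh_sq_sub_sinh_sq x); nra).
  apply sqrt_square. pose proof (sinh_ge_id x Hx). lra.
Qed.

Lemma one_sub_tanh_sq (x : R) : 1 - tanh x ^ 2 = / cosh x ^ 2.
Proof.
  unfold tanh. pose proof (cosh_sq_sub_sinh_sq x) as Hpyth. pose proof (cosh_ge_1 x).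
  replace (/ cosh x ^ 2) with ((cosh x ^ 2 - sinh x ^ 2) / cosh x ^ 2)
    by (rewrite Hpyth; field; lra).
  field. lra.
Qed.

Lemma one_sub_tanh (x : R) : 1 - tanh x = exp (- x) / cosh x.
Proof.
  unfold tanh. rewrite <- cosh_sub_sinh. pose proof (cosh_ge_1 x). field. lra.
Qed.

Lemma exp_neg_double_le_one_sub_tanh_sq (x : R) : 0 <= x -> exp (- (2 * x)) <= 1 - tanh x ^ 2.
Proof.
  intros Hx. rewrite one_sub_tanh_sq.
  replace (- (2 * x)) with (- x + - x) by ring.
  rewrite exp_plus, exp_Ropp, <- Rinv_mult.
  replace (cosh x ^ 2) with (cosh x * cosh x) by ring.
  apply Rinv_le_contravar.
  - pose proof (cosh_ge_1 x). nra.
  - pose proof (cosh_le_exp x Hx). pose proof (cosh_ge_1 x). nra.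
Qed.

Lemma cosh_sub_coth_mul_sinh (x y : R) :
  0 < x -> cosh y - cosh x / sinh x * sinh y = sinh (x - y) / sinh x.
Proof.
  intros Hx. pose proof (sinh_pos x Hx). rewrite sinh_sub. field. lra.
Qed.

Lemma cos_sub_mul_sin_ge (z s : R) : 0 <= z -> 0 < s -> 1 - s ^ 2 / 2 - z <= cos s - z / s * sin s.
Proof.
  intros Hz Hs.
  assert (Hsin : z / s * sin s <= z).
  { replace z with (z / s * s) at 2 by (field; lra).
    apply Rmult_le_compat_l; [apply Rmult_le_pos; [lra | left; now apply Rinv_0_lt_compat]|].
    left. now apply sin_lt_x. }
  pose proof (cos_ge_1_sub_sq_div_2 s).
  lra.
Qed.

Lemma D_omegaN_mul_xi (D l beta a : R) :
  0 < a -> 0 <= beta -> D * omegaN a beta * xi D l beta a = D ^ 2 * l * beta / 8.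
Proof.
  intros Ha Hb. unfold omegaN, xi.
  assert (Hsqrt : sqrt (a * beta) * sqrt (beta / a) = beta).
  { rewrite <- sqrt_mult_alt by nra.
    replace (a * beta * (beta / a)) with (beta * beta) by (field; lra).
    now apply sqrt_square. }
  replace (D * (sqrt (a * beta) / 2) * (D * l / 4 * sqrt (beta / a)))
    with (D ^ 2 * l / 8 * (sqrt (a * beta) * sqrt (beta / a))) by field.
  rewrite Hsqrt. field.
Qed.

Lemma xi_eq (D l beta k : R) :
  0 < D -> 0 < l -> 0 < beta -> 0 < k -> xi D l beta ((D * l / 4) ^ 2 * beta / k ^ 2) = k.
Proof.
  intros HD Hl Hb Hk. unfold xi.
  assert (0 < D * l) by nra.
  replace (beta / ((D * l / 4) ^ 2 * beta / k ^ 2)) with ((k / (D * l / 4)) * (k / (D * l / 4)))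
    by (field; repeat split; lra).
  rewrite sqrt_square by (left; apply Rdiv_lt_0_compat; lra).
  field. lra.
Qed.

Lemma c_under_le (D l beta : R) :
  0 < D -> 0 < l -> 0 < beta -> D ^ 2 * l * beta < 8 ->
  c_under D l beta (4 / (D ^ 2 * beta))
  <= 2 * exp (D ^ 2 * l * beta / 8) / (1 - D ^ 2 * l * beta / 8) ^ 2.
Proof.
  intros HD Hl Hb Hsmall.
  assert (HD2 : 0 < D ^ 2) by (apply pow_lt; lra).
  set (z := D ^ 2 * l * beta / 8).
  assert (Hz : 0 < z < 1).
  { assert (0 < D ^ 2 * l * beta) by (repeat apply Rmult_lt_0_compat; lra).
    unfold z; lra. }
  set (a := 4 / (D ^ 2 * beta)).
  assert (Ha : 0 < a) by (apply Rdiv_lt_0_compat; [lra | now apply Rmult_lt_0_compat]).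
  assert (Hxi : xi D l beta a = z).
  { replace a with ((D * l / 4) ^ 2 * beta / z ^ 2) by (unfold a, z; field; lra).
    apply xi_eq; lra. }
  assert (Hw : D * omegaN a beta = 1).
  { pose proof (D_omegaN_mul_xi D l beta a Ha ltac:(lra)) as Hprod.
    rewrite Hxi in Hprod. fold z in Hprod.
    apply (Rmult_eq_reg_r z); lra. }
  unfold c_under. cbv zeta. rewrite Hw, Hxi, !Rmult_1_l.
  set (s := sqrt (1 - z ^ 2)).
  assert (Hs : 0 < s) by (apply sqrt_lt_R0; nra).
  assert (Hs2 : s ^ 2 = 1 - z ^ 2) by (apply pow2_sqrt; nra).
  pose proof (cos_sub_mul_sin_ge z s ltac:(lra) Hs) as Hden.
  replace (2 * exp z / (1 - z) ^ 2) with (exp z / ((1 - z) ^ 2 / 2)) by (field; lra).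
  apply Rdiv_le_contravar_r.
  - left; apply exp_pos.
  - nra.
  - rewrite Hs2 in Hden. lra.
Qed.

Lemma exp_div_sinh_ratio_le (t : R) :
  0 < t -> exp t / (sinh (t * (1 - tanh t)) / sinh t) <= exp (4 * t) / (2 * t).
Proof.
  intros Ht.
  pose proof (cosh_ge_1 t) as Hcosh.
  pose proof (sinh_pos t Ht) as Hsinh.
  pose proof (exp_pos t) as Hexp.
  set (v := t * (1 - tanh t)).
  assert (Hv : v = t * exp (- t) / cosh t) by (unfold v; rewrite one_sub_tanh; field; lra).
  assert (Hv0 : 0 < v) by (rewrite Hv; pose proof (exp_pos (- t)); apply Rdiv_lt_0_compat; nra).
  apply Rle_trans with (exp t / (v / sinh t)).
  { apply Rdiv_le_contravar_r; try lra.
    - now apply Rdiv_lt_0_compat.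
    - apply Rmult_le_compat_r; [left; now apply Rinv_0_lt_compat|].
      apply sinh_ge_id; lra. }
  replace (exp t / (v / sinh t)) with (exp t ^ 2 * sinh t * cosh t / t)
    by (rewrite Hv, exp_Ropp; field; repeat split; lra).
  replace (exp (4 * t)) with (exp t ^ 4)
    by (replace (4 * t) with (t + t + t + t) by ring; rewrite !exp_plus; ring).
  replace (exp t ^ 4 / (2 * t)) with (exp t ^ 2 * (exp t / 2) * exp t / t) by (field; lra).
  unfold Rdiv at 1 3. apply Rmult_le_compat_r; [left; now apply Rinv_0_lt_compat|].
  pose proof (sinh_le_half_exp t). pose proof (cosh_le_exp t ltac:(lra)).
  apply Rmult_le_compat; nra.
Qed.

Lemma c_over_le (D l beta t : R) :
  0 < D -> 0 < l -> 0 < beta -> t = D ^ 2 * l * beta / 8 ->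
  c_over D l beta ((D * l / 4) ^ 2 * beta / cosh t ^ 2) <= exp (4 * t) / (2 * t).
Proof.
  intros HD Hl Hb Ht_def.
  assert (Ht : 0 < t) by (rewrite Ht_def; repeat apply Rmult_lt_0_compat; try apply pow_lt; lra).
  pose proof (cosh_ge_1 t) as Hcosh.
  set (a := (D * l / 4) ^ 2 * beta / cosh t ^ 2).
  assert (Ha : 0 < a).
  { apply Rdiv_lt_0_compat; [|nra].
    apply Rmult_lt_0_compat; [apply pow_lt; nra | lra]. }
  assert (Hxi : xi D l beta a = cosh t) by (apply xi_eq; lra).
  assert (Hw : D * omegaN a beta = t / cosh t).
  { pose proof (D_omegaN_mul_xi D l beta a Ha ltac:(lra)) as Hprod.
    rewrite Hxi, <- Ht_def in Hprod.
    apply (Rmult_eq_reg_r (cosh t)); [rewrite Hprod; field | ]; lra. }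
  unfold c_over. cbv zeta.
  rewrite Hw, Hxi, sqrt_cosh_sq_sub_1 by lra.
  replace (t / cosh t * cosh t) with t by (field; lra).
  replace (t / cosh t * sinh t) with (t * tanh t) by (unfold tanh; field; lra).
  rewrite cosh_sub_coth_mul_sinh by exact Ht.
  replace (t - t * tanh t) with (t * (1 - tanh t)) by ring.
  now apply exp_div_sinh_ratio_le.
Qed.

Theorem lemma14 (D l beta : R) (hD : 0 < D) (hl : 0 < l) (hb : 0 < beta) :
  (D ^ 2 * l * beta < 8 ->
   let a := 4 / (D ^ 2 * beta) in
   a >= l / 2 /\
   c_under D l beta a <= 2 * exp 1 / (1 - D ^ 2 * l * beta / 8) ^ 2) /\
  (let a := D ^ 2 * l ^ 2 * beta / 16 * (1 - (tanh (D ^ 2 * l * beta / 8)) ^ 2) in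
   a >= D ^ 2 * l ^ 2 * beta / 16 * exp (- (D ^ 2 * l * beta / 4)) /\
   c_over D l beta a <= 4 / (D ^ 2 * l * beta) * exp (D ^ 2 * l * beta / 2)).
Proof.
  assert (HD2 : 0 < D ^ 2) by (apply pow_lt; lra).
  assert (Hk : 0 < D ^ 2 * l * beta) by (repeat apply Rmult_lt_0_compat; lra).
  split.
  - intros Hsmall a. split.
    + apply Rle_ge. unfold a. apply (Rmult_le_reg_r (2 * (D ^ 2 * beta))); [nra|].
      field_simplify; lra.
    + eapply Rle_trans; [now apply c_under_le|].
      unfold Rdiv. apply Rmult_le_compat_r; [left; apply Rinv_0_lt_compat; nra|].
      apply Rmult_le_compat_l; [lra|]. apply exp_le_compat. lra.
  - set (t := D ^ 2 * l * beta / 8). intros a.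
    assert (Ha : a = (D * l / 4) ^ 2 * beta / cosh t ^ 2)
      by (unfold a; rewrite one_sub_tanh_sq; field; pose proof (cosh_ge_1 t); lra).
    split.
    + apply Rle_ge. apply Rmult_le_compat_l; [nra|].
      replace (D ^ 2 * l * beta / 4) with (2 * t) by (unfold t; field).
      apply exp_neg_double_le_one_sub_tanh_sq. unfold t. lra.
    + rewrite Ha. eapply Rle_trans; [now apply c_over_le|].
      right. unfold t. replace (D ^ 2 * l * beta / 2) with (4 * (D ^ 2 * l * beta / 8)) by field.
      field. lra.
Qed.
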